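(* Let $\Phi$ be an $N\times\mathcal{C}$ complex matrix ($\mathcal{C}\ge 2$) with no repeated columns which is $\eta$-StRIP-able for some $\eta\in(0,1]$, with columns $\varphi_1,\dots,\varphi_{\mathcal{C}}$. Let $1\le k\le\mathcal{C}$ and fix complex numbers $\alpha_1,\dots,\alpha_k$. Let $\pi=(\pi_1,\dots,\pi_{\mathcal{C}})$ be a uniformly random permutation of $\{1,\dots,\mathcal{C}\}$, let $\alpha\in\mathbb{C}^{\mathcal{C}}$ be the vector with entry $\alpha_j$ at position $\pi_j$ for $j=1,\dots,k$ and zero elsewhere, and let $f:=N^{-1/2}\Phi\alpha=N^{-1/2}\sum_{j=1}^k\alpha_j\varphi_{\pi_j}$. Then $$\left(1-\frac{k-1}{\mathcal{C}-1}\right)\|\alpha\|^2\leq\mathbb{E}_\pi\left[\|f\|^2\right]\leq\left(1+\frac{1}{\mathcal{C}-1}\right)\|\alpha\|^2,$$ where $\mathbb{E}_\pi$ denotes expectation over $\pi$ only.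
   Context: Columns of $\Phi$ have entries $\varphi_j(x)$, $x=1,\dots,N$. For $0<\eta\le 1$, $\Phi$ is called $\eta$-StRIP-able if: (St1) $\sum_{j=1}^{\mathcal{C}}\varphi_j(x)\overline{\varphi_j(y)}=0$ for $x\neq y$, and $\sum_{j=1}^{\mathcal{C}}\varphi_j(x)=0$ for all $x$; (St2) the columns form a group under pointwise multiplication, whose identity is the all-ones column $\varphi_1$; (St3) for all $j\in\{2,\dots,\mathcal{C}\}$, $\left|\sum_x\varphi_j(x)\right|^2\leq N^{2-\eta}$. $\|\cdot\|$ is the Euclidean norm. *)

From HB Require Import structures.
From mathcomp Require Import all_boot all_order all_algebra all_fingroup.
From mathcomp Require Import complex.
From mathcomp Require Import reals exp.
Set Implicit Arguments. Unset Strict Implicit. Unset Printing Implicit Defensive.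
Import Order.TTheory GRing.Theory Num.Theory.
Local Open Scope ring_scope.
Local Open Scope complex_scope.

Definition cmod2 (R : realType) (z : R[i]) : R := let: a +i* b := z in a ^+ 2 + b ^+ 2.

Definition vnorm2 (R : realType) n (v : 'cV[R[i]]_n) : R :=
  \sum_(i < n) cmod2 (v i ord0).

Definition cconj (R : realType) (z : R[i]) : R[i] := let: a +i* b := z in a -i* b.

(* eta-StRIP-able; columns are indexed by 'I_Cc and the index of the
   identity column phi_1 is the designated index [one]. *)
Definition StRIPable (R : realType) (N Cc : nat) (eta : R)
    (Phi : 'M[R[i]]_(N, Cc)) (one : 'I_Cc) : Prop :=
  (forall x y : 'I_N, x != y ->
      \sum_(j < Cc) Phi x j * cconj (Phi y j) = 0) /\
  (forall x : 'I_N, \sum_(j < Cc) Phi x j = 0) /\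
  (* (St2): columns form a group under pointwise multiplication,
     with identity the all-ones column phi_1 *)
  (forall x : 'I_N, Phi x one = 1) /\
  (forall i j : 'I_Cc, exists l : 'I_Cc, forall x : 'I_N,
      Phi x l = Phi x i * Phi x j) /\
  (forall i : 'I_Cc, exists l : 'I_Cc, forall x : 'I_N,
      Phi x i * Phi x l = 1) /\
  (forall j : 'I_Cc, j != one ->
      cmod2 (\sum_(x < N) Phi x j) <= (N%:R : R) `^ (2 - eta)).

Definition alpha_of (R : realType) (Cc k : nat) (hk : (k <= Cc)%N)
    (a : 'I_k -> R[i]) (pi : 'S_Cc) : 'cV[R[i]]_Cc :=
  \col_(i < Cc) \sum_(j < k | pi (widen_ord hk j) == i) a j.

Definition f_of (R : realType) (N Cc : nat) (Phi : 'M[R[i]]_(N, Cc))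
    (alpha : 'cV[R[i]]_Cc) : 'cV[R[i]]_N :=
  ((Num.sqrt (N%:R : R))^-1)%:C *: (Phi *m alpha).

Definition Eperm (R : realType) (Cc : nat) (F : 'S_Cc -> R) : R :=
  (#|[set: 'S_Cc]|%:R)^-1 * \sum_(pi : 'S_Cc) F pi.

From HB Require Import structures.
From mathcomp Require Import all_boot all_order all_algebra all_fingroup.
From mathcomp Require Import complex.
From mathcomp Require Import reals exp.
From mathcomp Require Import ring lra.
Import Order.TTheory GRing.Theory Num.Theory.
Local Open Scope ring_scope.
Local Open Scope complex_scope.

(* All entries of Phi are unimodular: multiplication by a column permutes the
   columns, so it preserves the row energy, which is at least 1 because of the
   all-ones column.  Together with the zero row sums this pins down the column
   Gram matrix G u v = <phi_u, phi_v> up to permutation averaging: G u u = N,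
   each row of G sums to 0, and averaging over pi makes all off-diagonal
   entries of a row equal, so E_pi G (pi u) (pi v) = - N / (C - 1) for u <> v.
   Expanding ||f||^2 then gives the exact identity
     E_pi ||f||^2 = (1 + 1/(C-1)) ||alpha||^2 - |sum_j alpha_j|^2 / (C-1),
   and both bounds follow from 0 <= |sum_j alpha_j|^2 <= k ||alpha||^2. *)

Section ComplexModulus.
Context {R : realType}.
Implicit Types y z : R[i].

Lemma cmod2E z : (cmod2 z)%:C = z * z^*.
Proof.
by case: z => a b; apply/eqP; rewrite eq_complex /=; apply/andP; split; apply/eqP; ring.
Qed.

Lemma cmod2_ge0 z : 0 <= cmod2 z.
Proof. by case: z => a b; rewrite addr_ge0 ?sqr_ge0. Qed.

Lemma cmod2M y z : cmod2 (y * z) = cmod2 y * cmod2 z.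
Proof. by apply: complexI; rewrite rmorphM /= !cmod2E rmorphM /=; ring. Qed.

Lemma cmod2_real (c : R) : cmod2 c%:C = c ^+ 2.
Proof. by rewrite /= expr0n addr0. Qed.

Lemma cmod2_sumE (I : finType) (b : I -> R[i]) :
  (cmod2 (\sum_i b i))%:C = \sum_i \sum_j b i * (b j)^*.
Proof.
by rewrite cmod2E rmorph_sum mulr_suml; apply: eq_bigr => i _; rewrite mulr_sumr.
Qed.

Lemma sum_cmod2E (I : finType) (b : I -> R[i]) :
  (\sum_i cmod2 (b i))%:C = \sum_i b i * (b i)^*.
Proof. by rewrite rmorph_sum; apply: eq_bigr => i _; apply: cmod2E. Qed.

Lemma sum_sqr_diff_conj k (a : 'I_k -> R[i]) :
  \sum_i \sum_j (a i - a j) * (a i - a j)^* =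
  (k%:R * \sum_j a j * (a j)^* - (\sum_j a j) * (\sum_j a j)^*) *+ 2.
Proof.
have expand i j : (a i - a j) * (a i - a j)^* =
    a i * (a i)^* + a j * (a j)^* - (a i * (a j)^* + a j * (a i)^*).
  by rewrite rmorphB /=; ring.
under eq_bigr => i _ do under eq_bigr => j _ do rewrite expand.
under eq_bigr => i _ do
  rewrite sumrB !big_split /= sumr_const card_ord -mulr_sumr -mulr_suml.
rewrite sumrB !big_split /= sumr_const card_ord -mulr_suml -mulr_sumr rmorph_sum /=.
by rewrite sumrMnl; ring.
Qed.

Lemma cmod2_sum_le {k} (a : 'I_k -> R[i]) :
  cmod2 (\sum_j a j) <= k%:R * \sum_j cmod2 (a j).
Proof.
have lagrange : ((k%:R * \sum_j cmod2 (a j) - cmod2 (\sum_j a j)) *+ 2)%:C =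
    \sum_i \sum_j (a i - a j) * (a i - a j)^*.
  by rewrite sum_sqr_diff_conj rmorphMn rmorphB rmorphM rmorph_nat /= sum_cmod2E cmod2E.
have : 0 <= \sum_i \sum_j (a i - a j) * (a i - a j)^*.
  by apply: sumr_ge0 => i _; apply: sumr_ge0 => j _; apply: mulcJ_ge0.
(* Compare real parts: [Re r%:C] is [r]. *)
rewrite -lagrange lecE => /andP[_ /=].
by rewrite pmulrn_lge0 // subr_ge0.
Qed.
End ComplexModulus.

Section GroupColumns.
Variables (R : realType) (N n : nat) (Phi : 'M[R[i]]_(N, n)) (one : 'I_n).
Hypothesis col_inj : forall i j : 'I_n, col i Phi = col j Phi -> i = j.
Hypothesis col_one : forall x, Phi x one = 1.
Hypothesis col_mul : forall i j, exists l, forall x, Phi x l = Phi x i * Phi x j.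
Hypothesis col_inv : forall i, exists l, forall x, Phi x i * Phi x l = 1.

Lemma nrows_gt0 : (1 < n)%N -> (0 < N)%N.
Proof.
move=> n_gt1; rewrite lt0n; apply/eqP => N0.
have /(congr1 val) // : Ordinal (ltnW n_gt1) = Ordinal n_gt1.
by apply: col_inj; apply/matrixP => x; have := ltn_ord x; rewrite [in X in (_ < X)%N]N0.
Qed.

Lemma group_col_neq0 x i : Phi x i != 0.
Proof.
have [l /(_ x)] := col_inv i.
by apply: contraPneq => ->; rewrite mul0r => /esym/eqP; rewrite oner_eq0.
Qed.

Lemma group_col_unimodular x i : Phi x i * (Phi x i)^* = 1.
Proof.
have [mul_i mul_iE] := fin_all_exists (col_mul i).
have mul_i_inj : injective mul_i.
  move=> j1 j2 eq_j; apply: col_inj; apply/matrixP => y z; rewrite !mxE.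
  by apply: (mulfI (group_col_neq0 y i)); rewrite -!mul_iE eq_j.
pose energy := \sum_j cmod2 (Phi x j).
have energyE : energy = cmod2 (Phi x i) * energy.
  rewrite /energy {1}(reindex_inj mul_i_inj) mulr_sumr.
  by apply: eq_bigr => j _; rewrite mul_iE cmod2M.
have energy_gt0 : 0 < energy.
  rewrite /energy (bigD1 one) //= col_one cmod2_real expr1n ltr_pwDl //.
  by apply: sumr_ge0 => j _; apply: cmod2_ge0.
have unit_mod : cmod2 (Phi x i) = 1.
  by apply: (mulIf (lt0r_neq0 energy_gt0)); rewrite mul1r -energyE.
by rewrite -cmod2E unit_mod.
Qed.

End GroupColumns.

Arguments nrows_gt0 {R N n Phi}.
Arguments group_col_unimodular {R N n Phi one}.

Section PermutationAverage.
Variables (V : zmodType) (n : nat) (G : 'I_n -> 'I_n -> V).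
Hypothesis G_row_sum0 : forall u, \sum_v G u v = 0.

(* Reindexing by a transposition fixing [u] shows that all off-diagonal sums
   of row [u] are equal, and together with the diagonal one they add up to 0. *)
Lemma sum_perm_offdiag u v : u != v ->
  (\sum_(s : 'S_n) G (s u) (s v)) *+ n.-1 = - \sum_(s : 'S_n) G (s u) (s u).
Proof.
move=> uv; pose T v := \sum_(s : 'S_n) G (s u) (s v).
have T_sum0 : \sum_v T v = 0.
  rewrite exchange_big big1 // => s _.
  by rewrite -[RHS](G_row_sum0 (s u)) [RHS](reindex_inj (@perm_inj _ s)).
have T_const w : u != w -> T w = T v.
  move=> uw; rewrite /T (reindex_inj (mulgI (tperm v w))) /=.
  by apply: eq_bigr => s _; rewrite !permM tpermR tpermD // eq_sym.
move: T_sum0; rewrite (bigD1 u) //= (eq_bigr (fun=> T v)) => [|w]; last first.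
  by rewrite eq_sym => /T_const.
by rewrite sumr_const cardC1 card_ord addrC => /eqP; rewrite addr_eq0 => /eqP.
Qed.

End PermutationAverage.

Arguments sum_perm_offdiag {V n G}.

Lemma mulmx_alpha_of (R : realType) N n k (hk : (k <= n)%N)
    (Phi : 'M[R[i]]_(N, n)) (a : 'I_k -> R[i]) (s : 'S_n) x :
  (Phi *m alpha_of hk a s) x ord0 = \sum_j a j * Phi x (s (widen_ord hk j)).
Proof.
rewrite mxE; under eq_bigr => i _ do rewrite mxE big_mkcond mulr_sumr /=.
rewrite exchange_big; apply: eq_bigr => j _ /=.
rewrite (bigD1 (s (widen_ord hk j))) //= eqxx big1 ?addr0; first exact: mulrC.
by move=> i; rewrite eq_sym => /negbTE ->; rewrite mulr0.
Qed.

Lemma vnorm2_f_of (R : realType) N n (Phi : 'M[R[i]]_(N, n)) v :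
  vnorm2 (f_of Phi v) = N%:R^-1 * vnorm2 (Phi *m v).
Proof.
rewrite /vnorm2 mulr_sumr; apply: eq_bigr => x _.
by rewrite mxE cmod2M cmod2_real exprVn sqr_sqrtr.
Qed.

Section ExpectedEnergy.
Variables (R : realType) (N n k : nat) (Phi : 'M[R[i]]_(N, n)).
Variables (a : 'I_k -> R[i]) (hk : (k <= n)%N).
Hypothesis unimodular : forall x i, Phi x i * (Phi x i)^* = 1.
Hypothesis row_sum0 : forall x, \sum_i Phi x i = 0.
Hypothesis N_gt0 : (0 < N)%N.
Hypothesis n_gt1 : (1 < n)%N.

Let c : R := (n%:R - 1)^-1.
Let gram u v := \sum_x Phi x u * (Phi x v)^*.

Lemma sum_perm_gram u v :
  \sum_(s : 'S_n) gram (s u) (s v) =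
  (#|'S_n| * N)%:R * ((u == v)%:R * (1 + c%:C) - c%:C).
Proof.
have gram_diag w : gram w w = N%:R.
  by rewrite /gram (eq_bigr (fun=> 1)) // sumr_const card_ord.
have [<-{v}|uv] := eqVneq u v.
  by rewrite mul1r addrK mulr1 (eq_bigr (fun=> N%:R)) // sumr_const natrM mulr_natl.
have gram_row_sum0 w : \sum_v gram w v = 0.
  rewrite exchange_big big1 // => x _.
  by rewrite -mulr_sumr -rmorph_sum row_sum0 rmorph0 mulr0.
have n1_neq0 : (n.-1%:R : R[i]) != 0 by rewrite pnatr_eq0 -lt0n -ltnS prednK // ltnW.
have cE : c%:C = (n.-1%:R)^-1.
  rewrite /c fmorphV rmorphB rmorph1 rmorph_nat.
  by rewrite -[n in n%:R - 1](prednK (ltnW n_gt1)) -natr1 addrK.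
have := sum_perm_offdiag gram_row_sum0 u v uv.
rewrite [X in - X](eq_bigr (fun=> N%:R)) // sumr_const => offdiag.
apply: (mulIf n1_neq0); rewrite mulr_natr offdiag mul0r sub0r cE mulrN mulNr.
by rewrite mulfVK // natrM mulr_natl.
Qed.

Lemma Eperm_energy :
  Eperm (fun s => vnorm2 (f_of Phi (alpha_of hk a s))) =
  (1 + c) * \sum_j cmod2 (a j) - c * cmod2 (\sum_j a j).
Proof.
pose w := widen_ord hk.
have energy s : (N%:R * vnorm2 (f_of Phi (alpha_of hk a s)))%:C =
    \sum_j \sum_j' a j * (a j')^* * gram (s (w j)) (s (w j')).
  rewrite vnorm2_f_of mulVKf ?pnatr_eq0 -?lt0n // rmorph_sum /=.
  under eq_bigr => x _ do rewrite mulmx_alpha_of cmod2_sumE.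
  rewrite exchange_big; apply: eq_bigr => j _.
  rewrite exchange_big; apply: eq_bigr => j' _.
  by rewrite /gram mulr_sumr; apply: eq_bigr => x _; rewrite rmorphM; ring.
have w_eq j j' : (w j == w j') = (j == j') by rewrite -val_eqE.
have sum_delta (F : 'I_k -> R[i]) j : \sum_j' (j == j')%:R * F j' = F j.
  rewrite (bigD1 j) //= eqxx mul1r big1 ?addr0 // => j'.
  by rewrite eq_sym => /negbTE ->; rewrite mul0r.
pose MN : R[i] := (#|'S_n| * N)%:R.
have expand : \sum_(s : 'S_n) (N%:R * vnorm2 (f_of Phi (alpha_of hk a s)))%:C =
    MN * ((1 + c%:C) * \sum_j a j * (a j)^* - c%:C * ((\sum_j a j) * (\sum_j a j)^*)).
  under eq_bigr => s _ do rewrite energy.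
  rewrite exchange_big; under eq_bigr => j _ do rewrite exchange_big.
  have term j j' : \sum_(s : 'S_n) a j * (a j')^* * gram (s (w j)) (s (w j')) =
      MN * (1 + c%:C) * ((j == j')%:R * (a j * (a j')^*))
      - MN * c%:C * (a j * (a j')^*).
    by rewrite -mulr_sumr sum_perm_gram w_eq /MN; ring.
  under eq_bigr => j _ do under eq_bigr => j' _ do rewrite term.
  under eq_bigr => j _ do rewrite sumrB -!mulr_sumr sum_delta.
  by rewrite sumrB -!mulr_sumr mulr_suml rmorph_sum; ring.
have M_neq0 : (#|'S_n|%:R : R) != 0 by rewrite pnatr_eq0 -lt0n card_Sn fact_gt0.
have MN_neq0 : ((#|'S_n| * N)%:R : R) != 0.
  by rewrite natrM mulf_neq0 // pnatr_eq0 -lt0n.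
rewrite /Eperm cardsT; apply: (mulfI MN_neq0); apply: complexI.
rewrite natrM [_ * N%:R]mulrC -mulrA mulVKf // mulr_sumr rmorph_sum expand.
rewrite !(rmorphM, rmorphB, rmorphD, rmorph1, rmorph_nat) /= sum_cmod2E cmod2E.
by rewrite /MN natrM; ring.
Qed.

End ExpectedEnergy.

Arguments Eperm_energy {R N n k Phi a hk}.

Theorem lemma3p2 (R : realType) (N Cc : nat) (Phi : 'M[R[i]]_(N, Cc))
    (one : 'I_Cc) (eta : R) (k : nat) (a : 'I_k -> R[i])
    (hC : (2 <= Cc)%N)
    (hinj : forall i j : 'I_Cc, col i Phi = col j Phi -> i = j)
    (heta : 0 < eta <= 1)
    (hstrip : StRIPable eta Phi one)
    (hk1 : (1 <= k)%N) (hk : (k <= Cc)%N) :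
  let En := Eperm (fun pi => vnorm2 (f_of Phi (alpha_of hk a pi))) in
  let na := \sum_(j < k) cmod2 (a j) in
  (1 - (k%:R - 1) / (Cc%:R - 1)) * na <= En /\
  En <= (1 + 1 / (Cc%:R - 1)) * na.
Proof.
move=> En na.
have [_ [row_sum0 [col_one [col_mul [col_inv _]]]]] := hstrip.
have unimodular := group_col_unimodular hinj col_one col_mul col_inv.
set c : R := (Cc%:R - 1)^-1.
have -> : En = (1 + c) * na - c * cmod2 (\sum_j a j).
  exact: Eperm_energy unimodular row_sum0 (nrows_gt0 hinj hC) hC.
have c_gt0 : 0 < c by rewrite invr_gt0 subr_gt0 ltr1n.
have lower : 0 <= c * (k%:R * na - cmod2 (\sum_j a j)).
  by rewrite mulr_ge0 ?(ltW c_gt0) // subr_ge0 cmod2_sum_le.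
have upper : 0 <= c * cmod2 (\sum_j a j) by rewrite mulr_ge0 ?(ltW c_gt0) ?cmod2_ge0.
by split; lra.
Qed.
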